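(* Let $G$ be a finite group, let $\alpha\in\operatorname{Aut}G$, let $x,y\in G$, and let $m$ be a positive integer. Let $A=G\rtimes\langle\alpha\rangle$ be the semidirect product, with multiplication $(g,\alpha^i)(h,\alpha^j)=(g\,\alpha^i(h),\alpha^{i+j})$. Then there exists $z\in G$ with $$y\,\alpha(y)\cdots\alpha^{m-1}(y)=z^{-1}\,x\,\alpha(x)\cdots\alpha^{m-1}(x)\,\alpha^m(z)$$ if and only if the $m$-th powers of the elements $(x,\alpha)$ and $(y,\alpha)$ of $A$ are conjugate in $A$.
   Context: Here $\langle\alpha\rangle$ is the (finite cyclic) subgroup of $\operatorname{Aut}G$ generated by $\alpha$. The displayed condition says that the cocycles $\hat{\mathbb{Z}}\to G$ determined by $x\alpha(x)\cdots\alpha^{m-1}(x)$ and $y\alpha(y)\cdots\alpha^{m-1}(y)$ are cohomologous when $1\in\hat{\mathbb{Z}}$ acts on $G$ by $\alpha^m$. *)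

From mathcomp Require Import all_boot all_fingroup.
Set Implicit Arguments. Unset Strict Implicit. Unset Printing Implicit Defensive.
Import GroupScope.
Local Open Scope group_scope.

(* Concrete model of the semidirect product A = G ⋊ <[alpha]>, where G is a
   subgroup of gT and alpha \in Aut G is a permutation of gT (acting trivially
   outside G).  *)
Section SD.
Variable gT : finGroupType.

Definition sd_mul (u v : gT * {perm gT}) : gT * {perm gT} :=
  (u.1 * u.2 v.1, u.2 * v.2).

Definition sd_inv (u : gT * {perm gT}) : gT * {perm gT} :=
  ((u.2^-1) (u.1^-1), u.2^-1).

Definition sd_one : gT * {perm gT} := (1, 1).

Fixpoint sd_pow (u : gT * {perm gT}) (n : nat) : gT * {perm gT} :=
  if n is n'.+1 then sd_mul u (sd_pow u n') else sd_one.

Definition in_sd (G : {set gT}) (alpha : {perm gT}) (u : gT * {perm gT}) : bool :=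
  (u.1 \in G) && (u.2 \in <[alpha]>).

Definition sd_conj (G : {set gT}) (alpha : {perm gT}) (u v : gT * {perm gT}) : Prop :=
  exists2 c, in_sd G alpha c & sd_mul (sd_inv c) (sd_mul u c) = v.

Definition twprod (alpha : {perm gT}) (x : gT) (m : nat) : gT :=
  \prod_(i < m) (alpha ^+ i) x.
End SD.

(* Write P and Q for the twisted products of x and y, so that (x, alpha)^m = (P, alpha^m).
   Conjugating (P, alpha^m) by (g, beta) gives (beta^-1 (g^-1 P alpha^m(g)), alpha^m),
   so the m-th powers are conjugate iff beta(Q) is alpha^m-twisted conjugate to P for
   some beta in <alpha>.  The beta can be dropped: alpha(Q) = y^-1 Q alpha^m(y), and
   twisted conjugacy is preserved by automorphisms commuting with alpha^m, so Q is
   twisted conjugate to every beta(Q). *)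

From mathcomp Require Import all_boot all_fingroup.
Import GroupScope.
Local Open Scope group_scope.

Set Implicit Arguments.
Unset Strict Implicit.
Unset Printing Implicit Defensive.

Section AutPerm.
Variables (gT : finGroupType) (G : {group gT}) (a : {perm gT}).
Hypothesis Aa : a \in Aut G.

Lemma Aut_permM u v : u \in G -> v \in G -> a (u * v) = a u * a v.
Proof. by move=> Gu Gv; rewrite -(autmE Aa) morphM. Qed.

Lemma Aut_permV u : u \in G -> a u^-1 = (a u)^-1.
Proof. by move=> Gu; rewrite -(autmE Aa) morphV. Qed.

Lemma Aut_perm1 : a 1 = 1.
Proof. by rewrite -(autmE Aa) morph1. Qed.

Lemma Aut_perm_prod n (F : 'I_n -> gT) : (forall i, F i \in G) ->
  a (\prod_(i < n) F i) = \prod_(i < n) a (F i).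
Proof. by move=> FG; rewrite -(autmE Aa) morph_prod. Qed.

End AutPerm.

Lemma sd_conj_pairE (gT : finGroupType) (G : {group gT}) (b c : {perm gT}) g a :
    b \in Aut G -> c \in Aut G -> g \in G -> a \in G ->
  sd_mul (sd_inv (g, b)) (sd_mul (a, c) (g, b))
    = (b^-1 (g^-1 * a * c g), b^-1 * c * b).
Proof.
move=> Ab Ac Gg Ga; rewrite /sd_mul /sd_inv /= mulgA.
by rewrite -(Aut_permM (groupVr Ab)) ?groupV ?groupM ?Aut_closed // mulgA.
Qed.

Section TwistedConjugacy.
Variables (gT : finGroupType) (G : {group gT}) (s : {perm gT}).
Hypothesis As : s \in Aut G.

Definition twconj (a b : gT) : Prop := exists2 w, w \in G & b = w^-1 * a * s w.

Lemma twconj_refl a : twconj a a.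
Proof. by exists 1; rewrite ?group1 // (Aut_perm1 As) invg1 mul1g mulg1. Qed.

Lemma twconj_sym a b : twconj a b -> twconj b a.
Proof.
case=> w Gw ->; exists w^-1; rewrite ?groupV //.
by rewrite invgK (Aut_permV As) // !mulgA mulgV mul1g -mulgA mulgV mulg1.
Qed.

Lemma twconj_trans a b c : twconj a b -> twconj b c -> twconj a c.
Proof.
case=> [w1 Gw1 ->] [w2 Gw2 ->]; exists (w1 * w2); rewrite ?groupM //.
by rewrite (Aut_permM As) // invMg !mulgA.
Qed.

Lemma twconj_Aut (b : {perm gT}) u v : b \in Aut G -> commute b s ->
  u \in G -> twconj u v -> twconj (b u) (b v).
Proof.
move=> Ab cbs Gu [w Gw ->]; exists (b w); first exact: Aut_closed.
rewrite !(Aut_permM Ab) ?(Aut_permV Ab) ?groupM ?groupV ?Aut_closed //.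
by rewrite -!permM cbs.
Qed.

End TwistedConjugacy.

Section TwistedProduct.
Variables (gT : finGroupType) (G : {group gT}) (alpha : {perm gT}).
Hypothesis Aalpha : alpha \in Aut G.

Lemma cycle_Aut b : b \in <[alpha]> -> b \in Aut G.
Proof. by apply/subsetP; rewrite cycle_subG. Qed.

Lemma twprodG x m : x \in G -> twprod alpha x m \in G.
Proof.
by move=> Gx; apply: group_prod => i _; rewrite Aut_closed ?groupX.
Qed.

Lemma sd_pow_twprod x n : x \in G ->
  sd_pow (x, alpha) n = (twprod alpha x n, alpha ^+ n).
Proof.
move=> Gx; elim: n => [|n IHn] /=; first by rewrite /twprod big_ord0.
rewrite IHn /sd_mul /= expgS /twprod big_ord_recl expg0 perm1.
rewrite (Aut_perm_prod Aalpha) => [|i]; last by rewrite Aut_closed ?groupX.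
by congr (_ * _, _); apply: eq_bigr => i _; rewrite -permM -expgSr.
Qed.

Lemma perm_twprod y m : y \in G ->
  alpha (twprod alpha y m) = y^-1 * twprod alpha y m * (alpha ^+ m) y.
Proof.
move=> Gy; case: m => [|m].
  by rewrite /twprod !big_ord0 (Aut_perm1 Aalpha) expg0 perm1 mulg1 mulVg.
rewrite /twprod (Aut_perm_prod Aalpha) => [|i]; last by rewrite Aut_closed ?groupX.
rewrite [in RHS]big_ord_recl expg0 perm1 mulKg big_ord_recr /=.
by congr (_ * _); [apply: eq_bigr => i _ |]; rewrite -permM -expgSr.
Qed.

Lemma twconj_twprod_cycle y m b : y \in G -> b \in <[alpha]> ->
  twconj G (alpha ^+ m) (twprod alpha y m) (b (twprod alpha y m)).
Proof.
move=> Gy /cycleP[k ->]; have Am : alpha ^+ m \in Aut G by rewrite groupX.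
elim: k => [|k IHk]; first by rewrite expg0 perm1; apply: twconj_refl.
apply: twconj_trans IHk _ => //; rewrite expgS permM.
apply: twconj_Aut; rewrite ?groupX ?Aut_closed ?twprodG //.
  exact/commuteX2/commute_refl.
by exists y; last exact (perm_twprod m Gy).
Qed.

End TwistedProduct.

Theorem lemma6p2 (gT : finGroupType) (G : {group gT}) (alpha : {perm gT})
  (x y : gT) (m : nat) :
  alpha \in Aut G -> x \in G -> y \in G -> (0 < m)%N ->
  (exists2 z, z \in G &
     twprod alpha y m = z^-1 * twprod alpha x m * (alpha ^+ m) z)
  <-> sd_conj G alpha (sd_pow (x, alpha) m) (sd_pow (y, alpha) m).
Proof.
(* The statement also holds for m = 0, where both sides are trivially true. *)
move=> Aalpha Gx Gy _; rewrite !(sd_pow_twprod Aalpha) //.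
have Am : alpha ^+ m \in Aut G by rewrite groupX.
have GP := twprodG Aalpha m Gx.
split=> [[z Gz ->] | [[g b] /andP[/= Gg Cb] conj_gb]].
  exists (z, 1); first by rewrite /in_sd /= Gz group1.
  by rewrite (sd_conj_pairE (group1 _) Am Gz GP) invg1 !perm1 mul1g mulg1.
have Ab := cycle_Aut Aalpha Cb.
move: conj_gb; rewrite (sd_conj_pairE Ab Am Gg GP) => -[Q_def _].
have PQ : twconj G (alpha ^+ m) (twprod alpha x m) (b (twprod alpha y m)).
  by exists g; rewrite // -Q_def permKV.
exact (twconj_trans Am PQ (twconj_sym Am (twconj_twprod_cycle Aalpha m Gy Cb))).
Qed.
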